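(* Let $a=(a_1,a_2,\dots)$ be any real sequence, $p\in[1,\infty)$ and $w$ a weight sequence. Then $$\sup_{\sigma\in\Pi}\Big(\sum_{i=1}^\infty |a_{\sigma_i}|^p w_i\Big)^{1/p}=\sup_{\sigma\in\Psi}\Big(\sum_{i=1}^\infty |a_{\sigma_i}|^p w_i\Big)^{1/p},$$ where both sides are understood in $[0,+\infty]$.
   Context: A weight sequence is a sequence $w=(w_i)$ of positive reals with $w_1=1\ge w_2\ge\dots$, $w_i\to0$, and $\sum_i w_i=+\infty$. $\Pi$ denotes the set of all bijections $\sigma:\mathbb{N}\to\mathbb{N}$ (written as sequences $(\sigma_1,\sigma_2,\dots)$) and $\Psi$ the set of all injective maps $\sigma:\mathbb{N}\to\mathbb{N}$. *)

(* Sequences are indexed from 0 (index i here = index i+1 in the paper). *)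
From mathcomp Require Import all_boot all_order all_algebra.
From mathcomp Require Import all_classical all_reals all_analysis.
Set Implicit Arguments. Unset Strict Implicit. Unset Printing Implicit Defensive.
Import Order.TTheory GRing.Theory Num.Theory.
Local Open Scope ring_scope.
Local Open Scope classical_set_scope.

Definition weight_seq (R : realType) (w : nat -> R) : Prop :=
  [/\ forall i, 0 < w i,
      w 0%N = 1,
      (forall i, w i.+1 <= w i),
      w @ \oo --> 0
    & (\sum_(0 <= i <oo) (w i)%:E = +oo)%E].

Definition lorentz_val (R : realType) (a : nat -> R) (p : R) (w : nat -> R)
    (s : nat -> nat) : \bar R :=
  poweR (\sum_(0 <= i <oo) ((`|a (s i)| `^ p) * w i)%:E)%E p^-1.

(* Every injection of nat agrees with some bijection on any initial segment
   {0, ..., N-1}.  A series of nonnegative terms is the supremum of its partial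
   sums, so the weighted sum along an injection is bounded by any common bound
   of the sums along bijections; monotonicity of x |-> x^(1/p) transports this
   to the Lorentz values. *)
From mathcomp Require Import all_boot all_order all_algebra.
From mathcomp Require Import all_classical all_reals all_analysis.
Import Order.TTheory GRing.Theory Num.Theory.
Local Open Scope ring_scope.
Local Open Scope classical_set_scope.

Definition ntperm (x y n : nat) : nat :=
  if n == x then y else if n == y then x else n.

Lemma ntpermK x y : involutive (ntperm x y).
Proof.
move=> n; rewrite /ntperm.
have [->|nx] := eqVneq n x; first by rewrite eqxx; case: eqVneq.
have [->|ny] := eqVneq n y; first by rewrite eqxx.
by rewrite (negbTE nx) (negbTE ny).
Qed.

Lemma bijective_prefix_of_injective (s : nat -> nat) (N : nat) :
  injective s -> exists2 t : nat -> nat, bijective t & forall i, (i < N)%N -> t i = s i.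
Proof.
move=> inj_s; elim: N => [|N [t bij_t eq_ts]]; first by exists id => //; exists id.
exists (ntperm (t N) (s N) \o t).
  by apply: bij_comp => //; apply/inv_bij/ntpermK.
move=> i; rewrite ltnS leq_eqVlt => /orP[/eqP ->|ltiN] /=.
  by rewrite /ntperm eqxx.
have neq_tN : s i != t N.
  by rewrite -eq_ts //; apply: contraTneq ltiN => /(bij_inj bij_t) ->; rewrite ltnn.
have neq_sN : s i != s N by apply: contraTneq ltiN => /inj_s ->; rewrite ltnn.
by rewrite /ntperm eq_ts // (negbTE neq_tN) (negbTE neq_sN).
Qed.

Section InjectiveSeries.
Local Open Scope ereal_scope.
Context {R : realType}.

Lemma nneseries_injective_le (u : nat -> nat -> \bar R) (M : \bar R) (s : nat -> nat) :
  (forall j i, 0 <= u j i) -> injective s ->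
  (forall t, bijective t -> \sum_(0 <= i <oo) u (t i) i <= M) ->
  \sum_(0 <= i <oo) u (s i) i <= M.
Proof.
move=> u0 inj_s bounded.
apply: lime_le; first exact: is_cvg_nneseries.
apply: nearW => N; have [t bij_t eq_ts] := bijective_prefix_of_injective _ N inj_s.
rewrite (@eq_big_nat _ _ _ _ _ _ (fun i => u (t i) i)); last first.
  by move=> i /andP[_ ltiN]; rewrite eq_ts.
apply: le_trans (bounded t bij_t).
exact: nneseries_lim_ge.
Qed.

Lemma poweRV_le (x y : \bar R) (r : R) : (0 < r)%R -> 0 <= x -> 0 <= y ->
  (x `^ r^-1 <= y) = (x <= y `^ r).
Proof.
move=> r0 x0 y0; have r0' : (0 <= r)%R := ltW r0.
have xK : (x `^ r^-1) `^ r = x by rewrite -poweRrM mulVf ?gt_eqF // poweRe1.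
have yK : (y `^ r) `^ r^-1 = y by rewrite -poweRrM mulfV ?gt_eqF // poweRe1.
have inR (z : \bar R) : 0 <= z -> z \in `[0, +oo%E]%R.
  by move=> z0; rewrite in_itv /= z0 leey.
apply/idP/idP => le_xy.
- by rewrite -xK; apply: gt0_ler_poweR; rewrite ?inR ?poweR_ge0.
- by rewrite -yK; apply: gt0_ler_poweR; rewrite ?inR ?poweR_ge0 ?invr_ge0.
Qed.

End InjectiveSeries.

Theorem mainTheorem2 (R : realType) (a : nat -> R) (p : R) (w : nat -> R) :
  1 <= p -> weight_seq w ->
  ereal_sup [set lorentz_val a p w s | s in [set s : nat -> nat | bijective s]] =
  ereal_sup [set lorentz_val a p w s | s in [set s : nat -> nat | injective s]].
Proof.
move=> p1 [w_gt0 _ _ _ _]; have p0 : 0 < p := lt_le_trans ltr01 p1.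
set E := ereal_sup _.
have term_ge0 j i : (0 <= ((`|a j| `^ p) * w i)%:E)%E.
  by rewrite lee_fin mulr_ge0 ?powR_ge0 ?ltW.
have sum_ge0 t : (0 <= \sum_(0 <= i <oo) ((`|a (t i)| `^ p) * w i)%:E)%E.
  exact: nneseries_ge0.
have le_E t : bijective t -> (lorentz_val a p w t <= E)%E.
  by move=> bij_t; apply: ereal_sup_ubound; exists t.
have E0 : (0 <= E)%E by apply: le_trans (le_E id _); [exact: poweR_ge0 | exists id].
apply/eqP; rewrite eq_le; apply/andP; split.
  by apply: ereal_sup_le => _ [s /= /bij_inj inj_s <-]; exists s.
apply: ge_ereal_sup => _ [s /= inj_s <-].
rewrite /lorentz_val (poweRV_le _ _ _ p0 (sum_ge0 s) E0).
apply: (nneseries_injective_le _ _ _ term_ge0 inj_s) => t bij_t.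
by rewrite -(poweRV_le _ _ _ p0 (sum_ge0 t) E0); exact: le_E t bij_t.
Qed.
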